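(* Let $V,W$ be finite-dimensional real inner product spaces and $L:V\to W$ a linear map. Assume $G:W\to W$ is independent of $\ker L^*$ with respect to the decomposition $W=\ker L^*\oplus\operatorname{im}L^{+*}$, and that $G(W)\subseteq\operatorname{im}L$. Then there exists a function $F:V\to V$ such that $G(x)=LF(L^*x)$ for all $x\in W$; more specifically, $F(y):=L^+G(L^{+*}y)$ is such a function.
   Context: $L^*$ is the adjoint of $L$. The Moore–Penrose pseudoinverse $L^+:W\to V$ is the unique linear map with $LL^+L=L$, $L^+LL^+=L^+$, and $LL^+$, $L^+L$ symmetric positive semi-definite; $L^{+*}$ denotes $(L^+)^*=(L^* )^+$. Given $W=W_1\oplus W_2$, a map $G:W\to W$ is independent of $W_1$ if $G(w_1+w_2)=G(w_2)$ for all $w_1\in W_1,w_2\in W_2$. *)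

(* Finite-dimensional real inner product spaces V, W are
   modelled as 'cV[R]_n, 'cV[R]_m with the standard inner product
   <x,y> = x^T y (every such space is isometric to one of these);
   linear maps are matrices acting on columns, so L^* = L^T. *)
From HB Require Import structures.
From mathcomp Require Import all_boot all_order all_algebra.
From mathcomp Require Import reals.
Set Implicit Arguments. Unset Strict Implicit. Unset Printing Implicit Defensive.
Import Order.TTheory GRing.Theory Num.Theory.
Local Open Scope ring_scope.

Definition sym_psd (R : realFieldType) (k : nat) (A : 'M[R]_k) : Prop :=
  A^T = A /\ forall x : 'cV[R]_k, 0 <= (x^T *m A *m x) 0 0.

(* P is the Moore-Penrose pseudoinverse of L (unique map with these properties) *)
Definition is_pinv (R : realFieldType) (m n : nat)
  (L : 'M[R]_(m, n)) (P : 'M[R]_(n, m)) : Prop :=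
  [/\ L *m P *m L = L, P *m L *m P = P, sym_psd (L *m P) & sym_psd (P *m L)].

Definition independent_of (T : zmodType) (W1 W2 : T -> Prop) (G : T -> T) : Prop :=
  forall w1 w2, W1 w1 -> W2 w2 -> G (w1 + w2) = G w2.

Definition kerM (R : ringType) (p q : nat) (A : 'M[R]_(p, q)) : 'cV[R]_q -> Prop :=
  fun x => A *m x = 0.
Definition imM (R : ringType) (p q : nat) (A : 'M[R]_(p, q)) : 'cV[R]_p -> Prop :=
  fun y => exists x : 'cV[R]_q, y = A *m x.

From HB Require Import structures.
From mathcomp Require Import all_boot all_order all_algebra.
From mathcomp Require Import reals.
Set Implicit Arguments. Unset Strict Implicit. Unset Printing Implicit Defensive.
Import Order.TTheory GRing.Theory Num.Theory.
Local Open Scope ring_scope.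

(* Transposed, it makes L^{+*} L^*
   a projection whose complement kills L^*, so x - L^{+*} L^* x lies in ker L^*
   and independence gives G x = G (L^{+*} L^* x); and L L^+ is the identity on
   im L, which contains G x. *)

Lemma independent_ofE (T : zmodType) (W1 W2 : T -> Prop) (G : T -> T) (x y : T) :
  independent_of W1 W2 G -> W1 (x - y) -> W2 y -> G x = G y.
Proof. by move=> indG W1xy W2y; rewrite -(indG _ _ W1xy W2y) subrK. Qed.

Section InnerInverse.

Variables (R : comNzRingType) (m n : nat) (L : 'M[R]_(m, n)) (Lp : 'M[R]_(n, m)).
Hypothesis LLpL : L *m Lp *m L = L.

Lemma trmx_inner_inverse : L^T *m Lp^T *m L^T = L^T.
Proof. by rewrite -!trmx_mul mulmxA LLpL. Qed.

Lemma kerM_sub_trmx_proj (x : 'cV[R]_m) : kerM L^T (x - Lp^T *m (L^T *m x)).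
Proof. by rewrite /kerM mulmxBr !mulmxA trmx_inner_inverse subrr. Qed.

Lemma imM_trmx_proj (x : 'cV[R]_m) : imM Lp^T (Lp^T *m (L^T *m x)).
Proof. by exists (L^T *m x). Qed.

Lemma mulmx_inner_inverse_imM (y : 'cV[R]_m) : imM L y -> L *m (Lp *m y) = y.
Proof. by case=> z ->; rewrite !mulmxA LLpL. Qed.

End InnerInverse.

Theorem mainTheorem9 (R : realType) (n m : nat) (L : 'M[R]_(m, n))
  (Lp : 'M[R]_(n, m)) (G : 'cV[R]_m -> 'cV[R]_m) :
  is_pinv L Lp ->
  independent_of (kerM L^T) (imM Lp^T) G ->
  (forall x : 'cV[R]_m, imM L (G x)) ->
  (exists F : 'cV[R]_n -> 'cV[R]_n, forall x : 'cV[R]_m, G x = L *m F (L^T *m x)) /\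
  (let F := fun y : 'cV[R]_n => Lp *m G (Lp^T *m y) in
   forall x : 'cV[R]_m, G x = L *m F (L^T *m x)).
Proof.
move=> [LLpL _ _ _] indG imG.
have factorG (x : 'cV[R]_m) : G x = L *m (Lp *m G (Lp^T *m (L^T *m x))).
  have -> : G (Lp^T *m (L^T *m x)) = G x.
    exact/esym/(independent_ofE indG (kerM_sub_trmx_proj LLpL x) (imM_trmx_proj L Lp x)).
  by rewrite (mulmx_inner_inverse_imM LLpL (imG x)).
split; last exact: factorG.
by exists (fun y => Lp *m G (Lp^T *m y)).
Qed.
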